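(* Let $C\subset V(\tfrac12 H^{0}_{24})$ be a union of spheres such that $\chi_C$ is a perfect coloring of $\tfrac12 H^{0}_{24}$ with parameters $((20+c,\,256-c)(c,\,276-c))$. Then either $c$ is divisible by $3$ or $c\ge 25$.
   Context: $E^{24}$ is the set of binary words of length $24$ with Hamming distance. $\tfrac12 H^{0}_{24}$ is the graph on even-weight words of $E^{24}$, adjacent iff at Hamming distance exactly $2$ (degree $276$). A sphere is a set $S\subset V(\tfrac12 H^{0}_{24})$ consisting of all $24$ words at Hamming distance $1$ from some odd-weight word (its center). For a set $C$ with $\emptyset\ne C\subsetneq V$, $\chi_C$ is a perfect coloring with parameters $((a,b)(c,d))$ if every vertex of $C$ has exactly $a$ neighbours in $C$ and $b$ outside, and every vertex outside $C$ has exactly $c$ neighbours in $C$ and $d$ outside. *)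

From mathcomp Require Import all_boot.
Set Implicit Arguments. Unset Strict Implicit. Unset Printing Implicit Defensive.

Definition word := {ffun 'I_24 -> bool}.

Definition wt (x : word) : nat := #|[set i | x i]|.
Definition hdist (x y : word) : nat := #|[set i | x i != y i]|.

(* Vertex set of 1/2 H^0_24 : even-weight words *)
Definition V : {set word} := [set x | ~~ odd (wt x)].

Definition adj (x y : word) : bool := hdist x y == 2.

Definition nbrs_in (A : {set word}) (x : word) : nat := #|[set y in A | adj x y]|.

Definition sphere (z : word) : {set word} := [set x | hdist x z == 1].

Definition union_of_spheres (C : {set word}) : Prop :=
  exists Z : {set word}, (forall z, z \in Z -> odd (wt z)) /\
                         C = \bigcup_(z in Z) sphere z.

Definition perfect_coloring (C : {set word}) (a b c d : nat) : Prop :=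
  [/\ C \subset V, C != set0, C != V,
      (forall x, x \in C -> nbrs_in C x = a /\ nbrs_in (V :\: C) x = b) &
      (forall x, x \in V :\: C -> nbrs_in C x = c /\ nbrs_in (V :\: C) x = d)].

From mathcomp Require Import all_boot zify.
Set Implicit Arguments. Unset Strict Implicit. Unset Printing Implicit Defensive.

(* The proof of lemma8
   distinguishes whether the spheres making up C are pairwise disjoint.

   - If two distinct spheres meet, at y say, their centres are at distance 2
     and the spheres share exactly two words; every other word of their union
     is adjacent to y.  Hence y has 24 + 24 - 2 - 1 = 45 neighbours in C, so
     20 + c >= 45, i.e. c >= 25.
   - If the spheres are pairwise disjoint, the neighbours in C of a vertex x
     outside C split along the spheres.  A sphere not containing x contains
     either no neighbour of x, or (when its centre is at distance 3 from x)
     exactly 3 of them.  So c, the number of neighbours of x in C, is a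
     multiple of 3. *)

Definition flip (x : word) (i : 'I_24) : word :=
  [ffun k => if k == i then ~~ x k else x k].

Lemma flipE x i k : flip x i k = if k == i then ~~ x k else x k.
Proof. by rewrite ffunE. Qed.

Lemma flip_inj x : injective (flip x).
Proof.
move=> i j /ffunP /(_ i); rewrite !flipE eqxx.
by case: eqP => // _; case: (x i).
Qed.

Lemma hdist_sym x y : hdist x y = hdist y x.
Proof. by apply: eq_card => k; rewrite !inE eq_sym. Qed.

Lemma hdist_refl x : hdist x x = 0.
Proof. by apply/eqP; rewrite cards_eq0; apply/eqP/setP=> k; rewrite !inE eqxx. Qed.

Lemma hdist_flip x y i :
  hdist x (flip y i) = if x i == y i then (hdist x y).+1 else (hdist x y).-1.
Proof.
rewrite /hdist.
have Di : (i \in [set k | x k != y k]) = (x i != y i) by rewrite inE.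
case: ifP => xyi.
- have -> : [set k | x k != flip y i k] = i |: [set k | x k != y k].
    apply/setP=> k; rewrite !inE flipE; case: (k =P i) => [->|] //=.
    by rewrite (eqP xyi); case: (y i).
  by rewrite cardsU1 Di xyi.
- have -> : [set k | x k != flip y i k] = [set k | x k != y k] :\ i.
    apply/setP=> k; rewrite !inE flipE; case: (k =P i) => [->|] //=.
    by move: xyi; case: (x i); case: (y i).
  by rewrite (cardsD1 i [set k | x k != y k]) Di xyi.
Qed.

Lemma hdist_flip_self x i : hdist x (flip x i) = 1.
Proof. by rewrite hdist_flip eqxx hdist_refl. Qed.

Lemma hdist_flip_flip x i j : hdist (flip x i) (flip x j) = if i == j then 0 else 2.
Proof.
rewrite hdist_flip hdist_sym hdist_flip_self flipE.
case: (j =P i) => [->|/eqP ne]; first by rewrite eqxx; case: (x i).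
by rewrite eq_sym (negbTE ne) eqxx.
Qed.

Lemma sphereE z : sphere z = [set flip z k | k : 'I_24].
Proof.
apply/setP=> y; rewrite inE; apply/idP/imsetP => [/cards1P [i Di] | [k _ ->]].
- exists i => //; apply/ffunP=> k; rewrite flipE.
  move/setP: Di => /(_ k); rewrite !inE.
  case: (k =P i) => [->|_] /=; last by move/negbFE/eqP.
  by case: (y i); case: (z i).
- by rewrite hdist_sym hdist_flip_self.
Qed.

Lemma card_sphere z : #|sphere z| = 24.
Proof. by rewrite sphereE card_imset ?card_ord //; apply: flip_inj. Qed.

Lemma sphere_sym y z : (y \in sphere z) = (z \in sphere y).
Proof. by rewrite !inE hdist_sym. Qed.

Lemma adj_in_sphere z y w : y \in sphere z -> w \in sphere z -> adj y w = (w != y).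
Proof.
rewrite sphereE => /imsetP [i _ ->] /imsetP [k _ ->].
by rewrite /adj hdist_flip_flip (inj_eq (@flip_inj z)) [k == _]eq_sym; case: (i == k).
Qed.

(* Spheres whose centres are at distance 2 share exactly two words, namely
   the flips of z1 at the two coordinates where z1 and z2 differ. *)
Lemma card_sphereI z1 z2 : hdist z1 z2 = 2 -> #|sphere z1 :&: sphere z2| = 2.
Proof.
move=> d2; have d2' : hdist z2 z1 = 2 by rewrite hdist_sym.
rewrite -[RHS]d2 /hdist -(card_imset _ (@flip_inj z1)); apply: eq_card => w.
rewrite inE sphereE; apply/andP/imsetP => [[/imsetP [k _ ->]] | [k Dk ->]].
- rewrite inE hdist_sym hdist_flip d2'; case: ifP => //= /negbT Dk _.
  by exists k; rewrite // inE eq_sym.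
- split; first exact: imset_f.
  by move: Dk; rewrite !inE hdist_sym hdist_flip d2' eq_sym => /negbTE ->.
Qed.

Lemma nbrs_in_mono (A B : {set word}) x : A \subset B -> nbrs_in A x <= nbrs_in B x.
Proof.
move=> sAB; apply: subset_leq_card; apply/subsetP=> y.
by rewrite !inE => /andP [/(subsetP sAB) -> ->].
Qed.

Lemma nbrs_in_cover (P : {set {set word}}) x :
  trivIset P -> nbrs_in (cover P) x = \sum_(A in P) nbrs_in A x.
Proof.
move=> tiP; rewrite /nbrs_in -sum1dep_card big_trivIset_cond //.
by apply: eq_bigr => A _; rewrite sum1dep_card.
Qed.

Lemma nbrs_in_sphere x z : nbrs_in (sphere z) x = #|[set k | adj x (flip z k)]|.
Proof.
rewrite -(card_imset _ (@flip_inj z)); apply: eq_card => y.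
rewrite inE sphereE; apply/andP/imsetP => [[/imsetP [k _ ->] a] | [k a ->]].
- by exists k; rewrite ?inE.
- by move: a; rewrite imset_f // inE.
Qed.

(* A sphere not containing x holds 0 or 3 neighbours of x: some word of the
   sphere is adjacent to x only if the centre is at distance 3 from x, and then
   exactly the flips at the 3 coordinates where x and z differ are. *)
Lemma sphere_nbrs_dvd3 x z : x \notin sphere z -> 3 %| nbrs_in (sphere z) x.
Proof.
rewrite inE nbrs_in_sphere => d1.
have [d3 | d3] := eqVneq (hdist x z) 3.
- suff -> : [set k | adj x (flip z k)] = [set k | x k != z k] by rewrite -/(hdist x z) d3.
  by apply/setP=> k; rewrite !inE /adj hdist_flip d3; case: (x k == z k).
- suff -> : [set k | adj x (flip z k)] = set0 by rewrite cards0.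
  apply/setP=> k; rewrite !inE /adj hdist_flip.
  by case: (x k == z k); apply/eqP; lia.
Qed.

Lemma sphere_overlap_nbrs z1 z2 y :
  z1 != z2 -> y \in sphere z1 -> y \in sphere z2 ->
  nbrs_in (sphere z1 :|: sphere z2) y = 45.
Proof.
move=> z12 y1 y2.
have d2 : hdist z1 z2 = 2.
  move: y1 y2; rewrite [y \in sphere z1]sphere_sym [y \in sphere z2]sphere_sym sphereE.
  move=> /imsetP [i _ Ei] /imsetP [j _ Ej]; move: z12.
  by rewrite Ei Ej hdist_flip_flip (inj_eq (@flip_inj y)); case: (i == j).
rewrite /nbrs_in.
have -> : [set w in sphere z1 :|: sphere z2 | adj y w] = (sphere z1 :|: sphere z2) :\ y.
  apply/setP=> w; rewrite inE in_setD1 in_setU andbC.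
  have [w1 | w1] /= := boolP (w \in sphere z1); first by rewrite (adj_in_sphere y1 w1).
  have [w2 | w2] /= := boolP (w \in sphere z2); first by rewrite (adj_in_sphere y2 w2).
  by rewrite !andbF.
have := cardsD1 y (sphere z1 :|: sphere z2).
have := cardsUI (sphere z1) (sphere z2).
rewrite !card_sphere card_sphereI // in_setU y1 /=; lia.
Qed.

Lemma not_trivIsetP (T : finType) (P : {set {set T}}) :
  ~~ trivIset P -> exists A B, [/\ A \in P, B \in P, A != B & ~~ [disjoint A & B]].
Proof.
move=> notTI.
have /existsP [A /existsP [B /and4P [PA PB nAB meetAB]]] :
    [exists A, exists B, [&& A \in P, B \in P, A != B & ~~ [disjoint A & B]]].
  apply: contraR notTI => /existsPn noMeet; apply/trivIsetP => A B PA PB nAB.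
  by move/existsPn: (noMeet A) => /(_ B); rewrite PA PB nAB => /negPn.
by exists A, B.
Qed.

Theorem lemma8 (C : {set word}) (c : nat) :
  union_of_spheres C ->
  perfect_coloring C (20 + c) (256 - c) c (276 - c) ->
  (3 %| c) \/ 25 <= c.
Proof.
move=> [Z [_ defC]] [sCV _ CneV inC outC].
have sphereC z : z \in Z -> sphere z \subset C by move=> zZ; rewrite defC (bigcup_sup z).
have [tiZ | /not_trivIsetP [_ [_ [/imsetP [z1 z1Z ->] /imsetP [z2 z2Z ->] n12 meet12]]]] :=
  boolP (trivIset (sphere @: Z)).
- left.
  have [x xVC] : exists x, x \in V :\: C.
    by apply/set0Pn; rewrite setD_eq0; apply: contra CneV => sVC; rewrite eqEsubset sCV.
  have xC : x \notin C by move: xVC; rewrite inE => /andP [].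
  rewrite -(outC x xVC).1 defC -cover_imset nbrs_in_cover //.
  apply: dvdn_sum => _ /imsetP [z zZ ->]; apply: sphere_nbrs_dvd3.
  by apply: contra xC => /(subsetP (sphereC z zZ)).
- right.
  have z12 : z1 != z2 by apply: contraNneq n12 => ->.
  move: meet12; rewrite -setI_eq0 => /set0Pn [y]; rewrite inE => /andP [y1 y2].
  have yC : y \in C := subsetP (sphereC z1 z1Z) y y1.
  have := nbrs_in_mono y (_ : sphere z1 :|: sphere z2 \subset C).
  rewrite subUset !sphereC // (inC y yC).1 sphere_overlap_nbrs //.
  by move=> /(_ isT); lia.
Qed.
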